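(* For each $n$, the set $\{\mathfrak{L}_a : a \text{ a weak composition of length } n\}$ is a basis of the polynomial ring $\mathbb{Z}[x_1,\ldots,x_n]$.
   Context: A weak composition of length $n$ is a sequence $a=(a_1,\ldots,a_n)$ of nonnegative integers; $x^a=x_1^{a_1}\cdots x_n^{a_n}$. A local move replaces consecutive entries $(0,k)$ at positions $p,p+1$ by $(i,j)$ with $i+j=k$, $i,j\ge0$. A fixed slide of $a$ is a weak composition obtained from $a$ by a (possibly empty) sequence of local moves in which $j>0$ is required whenever $a_{p+1}\ne 0$. The fundamental particle is $\mathfrak{L}_a=\sum x^b$ over the set of fixed slides $b$ of $a$. *)

From HB Require Import structures.
From mathcomp Require Import all_boot all_order all_algebra.
From mathcomp Require Import mpoly.
From Stdlib Require Import ClassicalEpsilon.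
Set Implicit Arguments. Unset Strict Implicit. Unset Printing Implicit Defensive.
Import GRing.Theory.
Local Open Scope ring_scope.

(* Weak compositions of length n are the monomials 'X_{1..n} (i.e. n-tuples
   of nat, position i : 'I_n corresponding to x_(i+1)); x^a is 'X_[a]. *)

Definition local_move (n : nat) (a b c : 'X_{1..n}) : Prop :=
  exists (p q : 'I_n),
    [/\ val q = (val p).+1, b p = 0%N, (c p + c q)%N = b q,
        (a q != 0%N -> (0 < c q)%N)
      & forall r : 'I_n, r != p -> r != q -> c r = b r].

Inductive fixed_slide (n : nat) (a : 'X_{1..n}) : 'X_{1..n} -> Prop :=
  | fs_refl : fixed_slide a a
  | fs_step (b c : 'X_{1..n}) :
      fixed_slide a b -> local_move a b c -> fixed_slide a c.

(* Fundamental particle: sum of x^b over fixed slides b of a.  Local moves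
   preserve the degree, so every fixed slide has degree mdeg a and the sum
   may range over monomials of degree < (mdeg a).+1. *)
Definition particle (n : nat) (a : 'X_{1..n}) : {mpoly int[n]} :=
  \sum_(b : 'X_{1..n < (mdeg a).+1})
     (if excluded_middle_informative (fixed_slide a (val b))
      then 'X_[val b] else 0).

From HB Require Import structures.
From mathcomp Require Import all_boot all_order all_algebra.
From mathcomp Require Import mpoly.
From mathcomp Require Import zify.
From Stdlib Require Import ClassicalEpsilon.
Import GRing.Theory.
Local Open Scope ring_scope.
Set Implicit Arguments. Unset Strict Implicit.

(* Weigh a monomial b by sum_i (n - i) b_i.  A local move preserves the
   degree and either changes nothing or moves a positive amount of mass one
   step to the left, which strictly increases the weight.  Hence particle a is
   x^a plus monomials of the same degree and strictly larger weight, i.e. the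
   particles are unitriangular with respect to the monomials.  Independence
   follows by looking at a monomial of minimal weight; spanning by induction
   on n * degree - weight, which is nonnegative. *)

Section Particles.

Variable n : nat.
Implicit Types a b c m : 'X_{1..n}.

Definition slide_weight b : nat := (\sum_(i < n) (n - i) * b i)%N.

Lemma slide_weight_le b : (slide_weight b <= mdeg b * n)%N.
Proof.
rewrite mdegE mulnC big_distrr /=; apply: leq_sum => i _.
by rewrite leq_mul2r leq_subr orbT.
Qed.

Lemma weighted_sum_shift (w : 'I_n -> nat) p q b c :
  p != q -> b p = 0%N -> (c p + c q)%N = b q ->
  (forall r, r != p -> r != q -> c r = b r) ->
  (\sum_i w i * c i + w q * c p = \sum_i w i * b i + w p * c p)%N.
Proof.
move=> npq bp0 cpq cr.
rewrite (bigD1 p) // (bigD1 q) 1?eq_sym //= [in RHS](bigD1 p) //.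
rewrite [in RHS](bigD1 q) 1?eq_sym //= (eq_bigr (fun i => w i * b i)%N).
  by rewrite bp0 -cpq; lia.
by move=> i /andP[ip iq]; rewrite cr.
Qed.

Lemma local_move_mdeg_weight a b c : local_move a b c ->
  mdeg c = mdeg b /\ (c = b \/ (slide_weight b < slide_weight c)%N).
Proof.
case=> p [q] [qE bp0 cpq _ cr].
have npq : p != q by apply/eqP => pq; move: qE; rewrite pq; lia.
split.
  have := weighted_sum_shift (fun=> 1%N) npq bp0 cpq cr.
  by rewrite !mdegE !(eq_bigr _ (fun i _ => mul1n _)); lia.
have := weighted_sum_shift (fun i => n - i)%N npq bp0 cpq cr.
have -> : (n - p = (n - q).+1)%N by have := ltn_ord q; move: qE => /= qE; lia.
rewrite -/(slide_weight c) -/(slide_weight b).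
have [cp0 _|] := posnP (c p); last by right; lia.
left; apply/mnmP => i.
have [->|ip] := eqVneq i p; first by rewrite cp0 bp0.
have [->|iq] := eqVneq i q; first by rewrite -cpq cp0.
exact: cr.
Qed.

Lemma fixed_slide_mdeg_weight a b : fixed_slide a b ->
  mdeg b = mdeg a /\ (b = a \/ (slide_weight a < slide_weight b)%N).
Proof.
elim=> [|{}b c _ [bdeg bwt] /local_move_mdeg_weight[cdeg cwt]]; first by split; [|left].
split; first by rewrite cdeg.
case: cwt => [->|lt_bc]; first by [].
by right; case: bwt => [<-|]; last by lia.
Qed.

Lemma mcoeff_particle_slide a m : fixed_slide a m -> (particle a)@_m = 1.
Proof.
move=> am; have [mdeg_m _] := fixed_slide_mdeg_weight am.
have lt_m : (mdeg m < (mdeg a).+1)%N by rewrite mdeg_m.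
rewrite /particle raddf_sum (bigD1 (Sub m lt_m)) //=.
case: (excluded_middle_informative (fixed_slide a m)) => /= [_|/(_ am)//].
rewrite mcoeffX eqxx.
rewrite big1 ?addr0 // => b /eqP bm.
case: (excluded_middle_informative (fixed_slide a (val b))) => /= _; last first.
  by rewrite mcoeff0.
by rewrite mcoeffX; case: eqP => // bmE; case: bm; apply: val_inj.
Qed.

Lemma mcoeff_particle_nslide a m : ~ fixed_slide a m -> (particle a)@_m = 0.
Proof.
move=> am; rewrite /particle raddf_sum big1 // => b _.
case: (excluded_middle_informative (fixed_slide a (val b))) => /= [ab|_]; last first.
  by rewrite mcoeff0.
by rewrite mcoeffX; case: eqP => // bm; case: am; rewrite -bm.
Qed.

Lemma msupp_particle_subX a m :
  m \in msupp (particle a - 'X_[a]) -> fixed_slide a m /\ m != a.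
Proof.
rewrite mcoeff_msupp mcoeffB mcoeffX.
have [<-|ma] := eqVneq a m.
  by rewrite mcoeff_particle_slide ?subrr ?eqxx //; exact: fs_refl.
case: (excluded_middle_informative (fixed_slide a m)) => [am _|am]; first by [].
by rewrite mcoeff_particle_nslide // subrr eqxx.
Qed.

Lemma particles_free (s : seq 'X_{1..n}) (c : 'X_{1..n} -> int) :
  uniq s -> \sum_(a <- s) c a *: particle a = 0 ->
  forall a, a \in s -> c a = 0.
Proof.
move=> s_uniq sum0 a0 a0s; apply/eqP/contraT => ca0.
pose S := [seq x <- s | c x != 0].
have exS : exists k, has (fun x => slide_weight x == k) S.
  by exists (slide_weight a0); apply/hasP; exists a0; rewrite ?mem_filter ?ca0.
have [k /hasP[x xS /eqP xk] kmin] := ex_minnP exS.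
move: xS; rewrite mem_filter => /andP[cx xs].
have := congr1 (mcoeff x) sum0; rewrite raddf_sum mcoeff0 (bigD1_seq x) //=.
rewrite mcoeffZ mcoeff_particle_slide ?mulr1; last exact: fs_refl.
rewrite big1_seq ?addr0; first by move/eqP: cx.
(* x has minimal weight in S, so it is a fixed slide of no other member of S *)
move=> y /andP[yx ys]; rewrite mcoeffZ.
have [->|cy] := eqVneq (c y) 0; first by rewrite mul0r.
rewrite mcoeff_particle_nslide ?mulr0 // => /fixed_slide_mdeg_weight[_].
case=> [xy|]; first by rewrite xy eqxx in yx.
have : (k <= slide_weight y)%N.
  by apply: kmin; apply/hasP; exists y; rewrite ?mem_filter ?cy.
by lia.
Qed.

Definition particle_span (D : nat) (p : {mpoly int[n]}) :=
  exists c : 'X_{1..n} -> int,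
    p = \sum_(a : 'X_{1..n < D}) c (val a) *: particle (val a).

Variable D : nat.

Lemma particle_span0 : particle_span D 0.
Proof. by exists (fun=> 0); rewrite big1 // => a _; rewrite scale0r. Qed.

Lemma particle_spanD p q :
  particle_span D p -> particle_span D q -> particle_span D (p + q).
Proof.
case=> [c1 ->] [c2 ->]; exists (fun a => c1 a + c2 a).
by rewrite -big_split; apply: eq_bigr => a _; rewrite scalerDl.
Qed.

Lemma particle_spanZ k p : particle_span D p -> particle_span D (k *: p).
Proof.
case=> c ->; exists (fun a => k * c a).
by rewrite scaler_sumr; apply: eq_bigr => a _; rewrite scalerA.
Qed.

Lemma particle_spanB p q :
  particle_span D p -> particle_span D q -> particle_span D (p - q).
Proof.
by move=> sp sq; apply: particle_spanD => //; rewrite -scaleN1r; exact: particle_spanZ.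
Qed.

Lemma particle_span_particle m : (mdeg m < D)%N -> particle_span D (particle m).
Proof.
move=> mD; exists (fun a => (a == m)%:R).
rewrite (bigD1 (Sub m mD)) //= eqxx scale1r big1 ?addr0 // => b /eqP bm.
by case: eqP => [bmE|_]; [case: bm; apply: val_inj | rewrite scale0r].
Qed.

Lemma particle_spanX m : (mdeg m < D)%N -> particle_span D 'X_[m].
Proof.
have [k] := ubnP (mdeg m * n - slide_weight m)%N.
elim: k m => // k IH m mk mD.
rewrite -(subKr (particle m) 'X_[m]).
apply: particle_spanB; first exact: particle_span_particle.
rewrite [particle m - _]mpolyE big_seq.
apply: big_ind => [|p q|b /msupp_particle_subX[mb bm]].
- exact: particle_span0.
- exact: particle_spanD.
apply: particle_spanZ.
have [bdeg [/eqP|lt_mb]] := fixed_slide_mdeg_weight mb; first by rewrite (negPf bm).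
have := slide_weight_le b; rewrite bdeg in mD * => le_b.
by apply: IH => //; lia.
Qed.

End Particles.

Lemma particle_span_msize n (p : {mpoly int[n]}) : particle_span (msize p) p.
Proof.
rewrite [p in particle_span _ p]mpolyE big_seq.
apply: big_ind => [|q r|m mp]; [exact: particle_span0 | exact: particle_spanD |].
by apply/particle_spanZ/particle_spanX/msize_mdeg_lt.
Qed.

Theorem proposition4p6 (n : nat) :
  (forall p : {mpoly int[n]},
     exists (s : seq 'X_{1..n}) (c : 'X_{1..n} -> int),
       p = \sum_(a <- s) c a *: particle a)
  /\
  (forall (s : seq 'X_{1..n}) (c : 'X_{1..n} -> int),
     uniq s -> \sum_(a <- s) c a *: particle a = 0 ->
     forall a, a \in s -> c a = 0).
Proof.
split; last exact: particles_free.
move=> p; have [c pE] := particle_span_msize p.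
exists (map val (index_enum 'X_{1..n < msize p})), c.
by rewrite big_map.
Qed.
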